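(* Let $\mathcal M=(X,(U_x)_{x\in X})$ be a local Moufang set with little projective group $G$. If $x,y\in X$ satisfy $x\not\sim y$, then $\langle U_x,U_y\rangle = G$.
   Context: Group actions are right actions, written $xg$; conjugation is $g^h=h^{-1}gh$. For a set $X$ with an equivalence relation $\sim$, $\overline{x}$ denotes the class of $x$, $\overline X$ the set of classes, and $\mathrm{Sym}(X,\sim)$ the group of bijections $g$ of $X$ with $x\sim y\iff xg\sim yg$; each such $g$ induces a permutation $\overline g$ of $\overline X$, and for a subgroup $U\le \mathrm{Sym}(X,\sim)$, $\overline U$ is the induced group of permutations of $\overline X$. A local Moufang set consists of a set with equivalence relation $(X,\sim)$ with $|\overline X|>2$ and, for each $x\in X$, a subgroup (root group) $U_x\le\mathrm{Sym}(X,\sim)$ such that: (LM0) if $x\sim y$ then $\overline{U_x}=\overline{U_y}$; (LM1) $U_x$ fixes $x$ and acts sharply transitively on $X\setminus\overline x$; (LM1') $\overline{U_x}$ fixes $\overline x$ and acts sharply transitively on $\overline X\setminus\{\overline x\}$; (LM2) $U_x^g=U_{xg}$ for all $x\in X$ and all $g$ in the little projective group $G:=\langle U_x\mid x\in X\rangle$. *)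

(* possibly infinite sets; permutations are functions X -> X,
   compared pointwise.  Right actions: x g is written (g x); the product g h
   (first g, then h) is the function fun x => h (g x). *)
From Stdlib Require Import Classical FunctionalExtensionality.

Definition Perm (X : Type) := X -> X.

Definition is_inverse {X : Type} (g gi : X -> X) : Prop :=
  forall x, gi (g x) = x /\ g (gi x) = x.

Definition in_Sym {X : Type} (R : X -> X -> Prop) (g : X -> X) : Prop :=
  (exists gi, is_inverse g gi) /\ forall x y, R x y <-> R (g x) (g y).

Inductive gen {X : Type} (S : (X -> X) -> Prop) : (X -> X) -> Prop :=
| gen_id : gen S (fun x => x)
| gen_S : forall g, S g -> gen S g
| gen_mul : forall g h, gen S g -> gen S h -> gen S (fun x => h (g x))
| gen_inv : forall g gi, gen S g -> is_inverse g gi -> gen S gi.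

Definition is_subgroup_Sym {X : Type} (R : X -> X -> Prop) (U : (X -> X) -> Prop) : Prop :=
  U (fun x => x) /\
  (forall g h, U g -> U h -> U (fun x => h (g x))) /\
  (forall g gi, U g -> is_inverse g gi -> U gi) /\
  (forall g, U g -> in_Sym R g).

Definition little_proj_group {X : Type} (U : X -> (X -> X) -> Prop) : (X -> X) -> Prop :=
  gen (fun g => exists z, U z g).

Record LocalMoufangSet (X : Type) (R : X -> X -> Prop) (U : X -> (X -> X) -> Prop) : Prop := {
  lm_refl : forall x, R x x;
  lm_sym : forall x y, R x y -> R y x;
  lm_trans : forall x y z, R x y -> R y z -> R x z;
  lm_three : exists a b c, ~ R a b /\ ~ R a c /\ ~ R b c;
  lm_subgroup : forall x, is_subgroup_Sym R (U x);
  (* LM0: x ~ y -> overline U_x = overline U_y (induced permutations of classes) *)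
  lm0 : forall x y, R x y ->
        forall g, U x g -> exists h, U y h /\ forall z, R (g z) (h z);
  lm1_fix : forall x g, U x g -> g x = x;
  lm1_trans : forall x y z, ~ R x y -> ~ R x z -> exists g, U x g /\ g y = z;
  lm1_sharp : forall x y g h, ~ R x y -> U x g -> U x h -> g y = h y ->
        forall w, g w = h w;
  lm1'_fix : forall x g, U x g -> R (g x) x;
  lm1'_trans : forall x y z, ~ R x y -> ~ R x z -> exists g, U x g /\ R (g y) z;
  lm1'_sharp : forall x y g h, ~ R x y -> U x g -> U x h -> R (g y) (h y) ->
        forall w, R (g w) (h w);
  (* LM2: U_x^g = U_{xg} for g in G;  U_x^g = g^-1 U_x g, i.e. w |-> g (u (gi w)) *)
  lm2 : forall x g gi, little_proj_group U g -> is_inverse g gi ->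
        forall h, U (g x) h <-> exists u, U x u /\ forall w, h w = g (u (gi w))
}.

(* U_x acts transitively on the points outside the class of x, so every
   z with z not~ x is y u for some u in U_x, and by LM2 the root group
   U_z = U_(y u) is the conjugate of U_y by u, hence lies in <U_x, U_y>.
   If z ~ x then z not~ y, and the same argument with x and y swapped
   applies.  So <U_x, U_y> contains every root group, i.e. all of G. *)
From Stdlib Require Import Classical FunctionalExtensionality.

Lemma gen_sub_gen {X : Type} (S T : (X -> X) -> Prop) :
  (forall g, S g -> gen T g) -> forall g, gen S g -> gen T g.
Proof.
  intros HST g Hg; induction Hg.
  - apply gen_id.
  - apply HST; assumption.
  - apply gen_mul; assumption.
  - eapply gen_inv; eassumption.
Qed.

Lemma gen_conj {X : Type} (S : (X -> X) -> Prop) (u ui h : X -> X) :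
  gen S u -> is_inverse u ui -> gen S h -> gen S (fun w => u (h (ui w))).
Proof.
  intros Hu Hui Hh.
  apply (gen_mul S (fun w => h (ui w)) u); [| exact Hu].
  apply (gen_mul S ui h); [| exact Hh].
  exact (gen_inv S u ui Hu Hui).
Qed.

Section RootGroups.

Variables (X : Type) (R : X -> X -> Prop) (U : X -> (X -> X) -> Prop).
Hypothesis HM : LocalMoufangSet X R U.

Lemma root_group_conj_sub_gen (S : (X -> X) -> Prop) (a b : X) (u : X -> X) :
  U a u -> gen S u -> (forall h, U b h -> gen S h) ->
  forall h, U (u b) h -> gen S h.
Proof.
  intros Hu HuS HbS h Hh.
  destruct (lm_subgroup _ _ _ HM a) as [_ [_ [_ HSym]]].
  destruct (HSym u Hu) as [[ui Hui] _].
  assert (HuG : little_proj_group U u) by (apply gen_S; exists a; exact Hu).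
  destruct (proj1 (lm2 _ _ _ HM b u ui HuG Hui h) Hh) as [v [Hv Hhv]].
  replace h with (fun w => u (v (ui w))) by
    (apply functional_extensionality; intro w; symmetry; apply Hhv).
  apply gen_conj; auto.
Qed.

Lemma root_group_sub_gen_pair (x y : X) :
  ~ R x y -> forall z h, U z h -> gen (fun g => U x g \/ U y g) h.
Proof.
  intros Hxy z.
  set (S := fun g => U x g \/ U y g).
  assert (Hx : forall h, U x h -> gen S h) by (intros; apply gen_S; left; assumption).
  assert (Hy : forall h, U y h -> gen S h) by (intros; apply gen_S; right; assumption).
  destruct (classic (R x z)) as [Hxz | Hxz].
  - assert (Hyx : ~ R y x) by (intro; apply Hxy, (lm_sym _ _ _ HM); assumption).
    assert (Hyz : ~ R y z) by
      (intro; apply Hxy, (lm_trans _ _ _ HM x z y); [| apply (lm_sym _ _ _ HM)]; assumption).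
    destruct (lm1_trans _ _ _ HM y x z Hyx Hyz) as [u [Hu <-]].
    apply (root_group_conj_sub_gen S y); auto.
  - destruct (lm1_trans _ _ _ HM x y z Hxy Hxz) as [u [Hu <-]].
    apply (root_group_conj_sub_gen S x); auto.
Qed.

End RootGroups.

Theorem mainTheorem1 (X : Type) (R : X -> X -> Prop) (U : X -> (X -> X) -> Prop)
  (HM : LocalMoufangSet X R U) (x y : X) (Hxy : ~ R x y) :
  forall g, gen (fun h => U x h \/ U y h) g <-> little_proj_group U g.
Proof.
  intro g; split.
  - apply gen_sub_gen; intros h [Hh | Hh]; apply gen_S; eauto.
  - apply gen_sub_gen; intros h [z Hz].
    exact (root_group_sub_gen_pair X R U HM x y Hxy z h Hz).
Qed.
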